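(* Let $(\mathcal C,\otimes,I)$ be a monoidal category and $N$ a self-similar object with code $\lhd:N\otimes N\to N$ and decode $\rhd:N\to N\otimes N$ (mutually inverse). Define $f\star g=\lhd(f\otimes g)\rhd$ for $f,g\in\mathcal C(N,N)$, making $(\mathcal C(N,N),\star)$ a one-object semi-monoidal category. Let $(N^\otimes,\otimes,I)$ be the full monoidal subcategory of $\mathcal C$ whose objects are $I$ and all objects built from $N$ (and $I$) by $\otimes$. Then there is a monoidal equivalence of categories between $(\mathcal C(N,N),\star)_{+I}$ and $(N^\otimes,\otimes,I)_{-\mathrm{el}}$.
   Context: A semi-monoidal category satisfies MacLane's axioms for a monoidal category except those involving the unit (tensor associative up to natural isomorphisms satisfying the pentagon). For a semi-monoidal category $\mathcal S$, $\mathcal S_{+I}$ denotes the monoidal category obtained by taking the coproduct of $\mathcal S$ with the one-object, one-arrow category $\{I\}$ and extending the tensor so that $I$ is a strict unit ($I\otimes X=X=X\otimes I$ on objects and arrows). For a monoidal category $\mathcal M$ with unit $I$, $\mathcal M_{-I}$ is the full (semi-monoidal) subcategory on all objects other than $I$, and the de-element functor is $\mathcal M_{-\mathrm{el}}=(\mathcal M_{-I})_{+I}$ (so all arrows into or out of the unit other than $1_I$ are deleted).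
   Formalization: The objects of $N^\otimes$ other than $I$ are the ⊗-words in N and I containing at least one N, with I⊗I identified with I via the left unitor, rather than all objects built from N and I. Apart from conventions, each condition added here is assumed in the paper as well or is needed for the statement above to hold. *)

(* Composition convention: comp g f = g o f. *)
From Stdlib Require Import Bool.

Set Implicit Arguments.

Record CatData := {
  ob : Type;
  hom : ob -> ob -> Type;
  idm : forall A, hom A A;
  comp : forall A B D, hom B D -> hom A B -> hom A D }.
Arguments hom {c} _ _.
Arguments idm {c} _.
Arguments comp {c A B D} _ _.

Record SemiData := {
  scat :> CatData;
  sten : ob scat -> ob scat -> ob scat;
  stenh : forall A A' B B', @hom scat A A' -> @hom scat B B' ->
            @hom scat (sten A B) (sten A' B');
  (* MacLane's convention: alpha_{A,B,C} : A (x) (B (x) C) -> (A (x) B) (x) C *)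
  sassoc : forall A B D, @hom scat (sten A (sten B D)) (sten (sten A B) D);
  sassoc_inv : forall A B D, @hom scat (sten (sten A B) D) (sten A (sten B D)) }.
Arguments sten {s} _ _.
Arguments stenh {s A A' B B'} _ _.
Arguments sassoc {s} _ _ _.
Arguments sassoc_inv {s} _ _ _.

Record MonData := {
  msemi :> SemiData;
  munit : ob msemi;
  lunit : forall A, @hom msemi (sten munit A) A;
  lunit_inv : forall A, @hom msemi A (sten munit A);
  runit : forall A, @hom msemi (sten A munit) A;
  runit_inv : forall A, @hom msemi A (sten A munit) }.
Arguments munit {m}.
Arguments lunit {m} _.
Arguments lunit_inv {m} _.
Arguments runit {m} _.
Arguments runit_inv {m} _.

Definition is_category (K : CatData) : Prop :=
  (forall A B (f : @hom K A B), comp (idm B) f = f) /\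
  (forall A B (f : @hom K A B), comp f (idm A) = f) /\
  (forall A B D E (f : @hom K A B) (g : @hom K B D) (h : @hom K D E),
      comp h (comp g f) = comp (comp h g) f).

Definition is_semimonoidal (S : SemiData) : Prop :=
  is_category S /\
  (forall A B, stenh (idm A) (idm B) = idm (@sten S A B)) /\
  (forall A A' A'' B B' B'' (f : @hom S A A') (f' : @hom S A' A'')
          (g : @hom S B B') (g' : @hom S B' B''),
      stenh (comp f' f) (comp g' g) = comp (stenh f' g') (stenh f g)) /\
  (forall A A' B B' D D' (f : @hom S A A') (g : @hom S B B') (h : @hom S D D'),
      comp (sassoc A' B' D') (stenh f (stenh g h)) =
      comp (stenh (stenh f g) h) (sassoc A B D)) /\
  (forall A B D : ob S, comp (sassoc_inv A B D) (sassoc A B D) = idm _) /\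
  (forall A B D : ob S, comp (sassoc A B D) (sassoc_inv A B D) = idm _) /\
  (forall A B D E : ob S,
      comp (sassoc (sten A B) D E) (sassoc A B (sten D E)) =
      comp (stenh (sassoc A B D) (idm E))
           (comp (sassoc A (sten B D) E) (stenh (idm A) (sassoc B D E)))).

Definition is_monoidal (M : MonData) : Prop :=
  is_semimonoidal M /\
  (forall A : ob M, comp (lunit_inv A) (lunit A) = idm _) /\
  (forall A : ob M, comp (lunit A) (lunit_inv A) = idm A) /\
  (forall A : ob M, comp (runit_inv A) (runit A) = idm _) /\
  (forall A : ob M, comp (runit A) (runit_inv A) = idm A) /\
  (forall A A' (f : @hom M A A'),
      comp (lunit A') (stenh (idm munit) f) = comp f (lunit A)) /\
  (forall A A' (f : @hom M A A'),
      comp (runit A') (stenh f (idm munit)) = comp f (runit A)) /\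
  (forall A B : ob M, comp (stenh (runit A) (idm B)) (sassoc A munit B) =
               stenh (idm A) (lunit B)).

(** * The construction S_{+I} : adjoin a strict unit to a semi-monoidal category *)

Section PlusI.
Variable S : SemiData.

Definition pI_ob := option (ob S).

Definition pI_hom (x y : pI_ob) : Type :=
  match x, y with
  | None, None => unit
  | Some a, Some b => @hom S a b
  | _, _ => Empty_set
  end.

Definition pI_id (x : pI_ob) : pI_hom x x :=
  match x as x0 return pI_hom x0 x0 with
  | None => tt
  | Some a => idm a
  end.

Definition pI_comp (x y z : pI_ob) : pI_hom y z -> pI_hom x y -> pI_hom x z.
Proof.
  destruct x as [a|], y as [b|], z as [c|]; intros g f; simpl in *;
    try destruct f; try destruct g;
    first [ exact (comp g f) | exact tt ].
Defined.

Definition pI_ten (x y : pI_ob) : pI_ob :=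
  match x, y with
  | None, _ => y
  | Some a, None => Some a
  | Some a, Some b => Some (sten a b)
  end.

Definition pI_tenh (x x' y y' : pI_ob) :
  pI_hom x x' -> pI_hom y y' -> pI_hom (pI_ten x y) (pI_ten x' y').
Proof.
  destruct x as [a|], x' as [a'|], y as [b|], y' as [b'|]; intros f g; simpl in *;
    try destruct f; try destruct g;
    first [ exact (stenh f g) | exact f | exact g | exact tt ].
Defined.

Definition pI_assoc (x y z : pI_ob) :
  pI_hom (pI_ten x (pI_ten y z)) (pI_ten (pI_ten x y) z).
Proof.
  destruct x as [a|], y as [b|], z as [c|]; simpl;
    first [ exact (sassoc a b c) | exact (idm _) | exact tt ].
Defined.

Definition pI_assoc_inv (x y z : pI_ob) :
  pI_hom (pI_ten (pI_ten x y) z) (pI_ten x (pI_ten y z)).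
Proof.
  destruct x as [a|], y as [b|], z as [c|]; simpl;
    first [ exact (sassoc_inv a b c) | exact (idm _) | exact tt ].
Defined.

Definition pI_lunit (x : pI_ob) : pI_hom (pI_ten None x) x := pI_id x.
Definition pI_lunit_inv (x : pI_ob) : pI_hom x (pI_ten None x) := pI_id x.
Definition pI_runit (x : pI_ob) : pI_hom (pI_ten x None) x.
Proof. destruct x; simpl; first [exact (idm _) | exact tt]. Defined.
Definition pI_runit_inv (x : pI_ob) : pI_hom x (pI_ten x None).
Proof. destruct x; simpl; first [exact (idm _) | exact tt]. Defined.

Definition plusI : MonData :=
  {| msemi := {| scat := {| ob := pI_ob; hom := pI_hom; idm := pI_id;
                             comp := pI_comp |};
                 sten := pI_ten; stenh := pI_tenh;
                 sassoc := pI_assoc; sassoc_inv := pI_assoc_inv |};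
     munit := None;
     lunit := pI_lunit; lunit_inv := pI_lunit_inv;
     runit := pI_runit; runit_inv := pI_runit_inv |}.
End PlusI.

(** * The construction M_{-I}: full semi-monoidal subcategory on objects other
    than the unit.  It is only a semi-monoidal category when the tensor of two
    non-unit objects is never the unit; this closure property is an argument. *)

Definition unit_closed (M : MonData) : Prop :=
  forall x y : ob M, x <> munit -> y <> munit -> sten x y <> munit.

Section MinusI.
Variable M : MonData.
Variable HM : unit_closed M.

Definition mI_ob := { x : ob M | x <> munit }.
Definition mI_hom (x y : mI_ob) : Type := @hom M (proj1_sig x) (proj1_sig y).
Definition mI_ten (x y : mI_ob) : mI_ob :=
  exist _ (sten (proj1_sig x) (proj1_sig y)) (HM (proj2_sig x) (proj2_sig y)).

Definition minusI : SemiData :=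
  {| scat := {| ob := mI_ob; hom := mI_hom;
                idm := fun x => idm (proj1_sig x);
                comp := fun x y z (g : mI_hom y z) (f : mI_hom x y) => comp g f |};
     sten := mI_ten;
     stenh := fun x x' y y' (f : mI_hom x x') (g : mI_hom y y') =>
                (stenh f g : mI_hom (mI_ten x y) (mI_ten x' y'));
     sassoc := fun x y z =>
                 (sassoc (proj1_sig x) (proj1_sig y) (proj1_sig z)
                  : mI_hom (mI_ten x (mI_ten y z)) (mI_ten (mI_ten x y) z));
     sassoc_inv := fun x y z =>
                 (sassoc_inv (proj1_sig x) (proj1_sig y) (proj1_sig z)
                  : mI_hom (mI_ten (mI_ten x y) z) (mI_ten x (mI_ten y z))) |}.
End MinusI.

Definition minusEl (M : MonData) (HM : unit_closed M) : MonData :=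
  plusI (minusI HM).

Definition self_similar (C : MonData) (N : ob C)
           (code : @hom C (sten N N) N) (decode : @hom C N (sten N N)) : Prop :=
  comp code decode = idm N /\ comp decode code = idm (sten N N).

Section Star.
Variable C : MonData.
Variable N : ob C.
Variable code : @hom C (sten N N) N.
Variable decode : @hom C N (sten N N).

Definition star (f g : @hom C N N) : @hom C N N :=
  comp code (comp (stenh f g) decode).

Definition star_assoc : @hom C N N :=
  comp code (comp (stenh code (idm N))
    (comp (sassoc N N N) (comp (stenh (idm N) decode) decode))).
Definition star_assoc_inv : @hom C N N :=
  comp code (comp (stenh (idm N) code)
    (comp (sassoc_inv N N N) (comp (stenh decode (idm N)) decode))).

Definition starSemi : SemiData :=
  {| scat := {| ob := unit; hom := fun _ _ => @hom C N N;
                idm := fun _ => idm N;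
                comp := fun _ _ _ g f => comp g f |};
     sten := fun _ _ => tt;
     stenh := fun _ _ _ _ f g => star f g;
     sassoc := fun _ _ _ => star_assoc;
     sassoc_inv := fun _ _ _ => star_assoc_inv |}.
End Star.

(** * The monoidal subcategory N^(x) generated by N.
    Non-unit objects: formal (x)-words in N and I containing at least one N,
    interpreted in C; the unit is I itself.
    Tensor: words are tensored formally (interpreted as the tensor in C);
    the only exception is I (x) I, which is identified with I via lambda_I. *)

Inductive word := wN | wI | wT (u v : word).

Fixpoint hasN (w : word) : bool :=
  match w with
  | wN => true
  | wI => false
  | wT u v => hasN u || hasN v
  end.

Section NTensor.
Variable C : MonData.
Variable N : ob C.

Fixpoint interp (w : word) : ob C :=
  match w with
  | wN => N
  | wI => munit
  | wT u v => sten (interp u) (interp v)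
  end.

Definition nword := { w : word | hasN w = true }.

Definition nt_ob := option nword.

Definition nt_interp (x : nt_ob) : ob C :=
  match x with None => munit | Some w => interp (proj1_sig w) end.

Definition nt_hom (x y : nt_ob) : Type := @hom C (nt_interp x) (nt_interp y).

Lemma hasN_l (u v : word) : hasN u = true -> hasN (wT u v) = true.
Proof. simpl; intros H; rewrite H; reflexivity. Qed.
Lemma hasN_r (u v : word) : hasN v = true -> hasN (wT u v) = true.
Proof. simpl; intros H; rewrite H, orb_true_r; reflexivity. Qed.

Definition nt_ten (x y : nt_ob) : nt_ob :=
  match x, y with
  | None, None => None
  | None, Some w => Some (exist _ (wT wI (proj1_sig w)) (@hasN_r wI (proj1_sig w) (proj2_sig w)))
  | Some w, None => Some (exist _ (wT (proj1_sig w) wI) (@hasN_l (proj1_sig w) wI (proj2_sig w)))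
  | Some v, Some w =>
      Some (exist _ (wT (proj1_sig v) (proj1_sig w)) (@hasN_l (proj1_sig v) (proj1_sig w) (proj2_sig v)))
  end.

Definition nt_k (x y : nt_ob) : @hom C (sten (nt_interp x) (nt_interp y))
                                       (nt_interp (nt_ten x y)) :=
  match x as x0, y as y0 return @hom C (sten (nt_interp x0) (nt_interp y0))
                                       (nt_interp (nt_ten x0 y0)) with
  | None, None => lunit munit
  | None, Some w => idm _
  | Some w, None => idm _
  | Some v, Some w => idm _
  end.
Definition nt_kinv (x y : nt_ob) : @hom C (nt_interp (nt_ten x y))
                                          (sten (nt_interp x) (nt_interp y)) :=
  match x as x0, y as y0 return @hom C (nt_interp (nt_ten x0 y0))
                                       (sten (nt_interp x0) (nt_interp y0)) with
  | None, None => lunit_inv munit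
  | None, Some w => idm _
  | Some w, None => idm _
  | Some v, Some w => idm _
  end.

Definition nt_tenh (x x' y y' : nt_ob) (f : nt_hom x x') (g : nt_hom y y') :
  nt_hom (nt_ten x y) (nt_ten x' y') :=
  comp (nt_k x' y') (comp (stenh f g) (nt_kinv x y)).

Definition nt_assoc (x y z : nt_ob) :
  nt_hom (nt_ten x (nt_ten y z)) (nt_ten (nt_ten x y) z) :=
  comp (nt_k (nt_ten x y) z)
   (comp (stenh (nt_k x y) (idm (nt_interp z)))
    (comp (sassoc (nt_interp x) (nt_interp y) (nt_interp z))
     (comp (stenh (idm (nt_interp x)) (nt_kinv y z))
           (nt_kinv x (nt_ten y z))))).

Definition nt_assoc_inv (x y z : nt_ob) :
  nt_hom (nt_ten (nt_ten x y) z) (nt_ten x (nt_ten y z)) :=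
  comp (nt_k x (nt_ten y z))
   (comp (stenh (idm (nt_interp x)) (nt_k y z))
    (comp (sassoc_inv (nt_interp x) (nt_interp y) (nt_interp z))
     (comp (stenh (nt_kinv x y) (idm (nt_interp z)))
           (nt_kinv (nt_ten x y) z)))).

Definition nt_lunit (x : nt_ob) : nt_hom (nt_ten None x) x :=
  comp (lunit (nt_interp x)) (nt_kinv None x).
Definition nt_lunit_inv (x : nt_ob) : nt_hom x (nt_ten None x) :=
  comp (nt_k None x) (lunit_inv (nt_interp x)).
Definition nt_runit (x : nt_ob) : nt_hom (nt_ten x None) x :=
  comp (runit (nt_interp x)) (nt_kinv x None).
Definition nt_runit_inv (x : nt_ob) : nt_hom x (nt_ten x None) :=
  comp (nt_k x None) (runit_inv (nt_interp x)).

Definition Ntensor : MonData :=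
  {| msemi := {| scat := {| ob := nt_ob; hom := nt_hom;
                             idm := fun x => idm (nt_interp x);
                             comp := fun x y z (g : nt_hom y z) (f : nt_hom x y) =>
                                       comp g f |};
                 sten := nt_ten; stenh := nt_tenh;
                 sassoc := nt_assoc; sassoc_inv := nt_assoc_inv |};
     munit := None;
     lunit := nt_lunit; lunit_inv := nt_lunit_inv;
     runit := nt_runit; runit_inv := nt_runit_inv |}.

Lemma Ntensor_unit_closed : unit_closed Ntensor.
Proof.
  intros [v|] [w|] Hv Hw; simpl in *; try congruence; discriminate.
Qed.
End NTensor.

Record MonFunctor (M1 M2 : MonData) := {
  Fob : ob M1 -> ob M2;
  Fhom : forall A B, @hom M1 A B -> @hom M2 (Fob A) (Fob B);
  Fphi : forall A B, @hom M2 (sten (Fob A) (Fob B)) (Fob (sten A B));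
  Fphi_inv : forall A B, @hom M2 (Fob (sten A B)) (sten (Fob A) (Fob B));
  Feps : @hom M2 munit (Fob munit);
  Feps_inv : @hom M2 (Fob munit) munit }.
Arguments Fob {M1 M2} _ _.
Arguments Fhom {M1 M2} _ {A B} _.
Arguments Fphi {M1 M2} _ _ _.
Arguments Fphi_inv {M1 M2} _ _ _.
Arguments Feps {M1 M2} _.
Arguments Feps_inv {M1 M2} _.

Definition is_strong_monoidal (M1 M2 : MonData) (F : MonFunctor M1 M2) : Prop :=
  (forall A : ob M1, Fhom F (idm A) = idm (Fob F A)) /\
  (forall A B D (f : @hom M1 A B) (g : @hom M1 B D),
      Fhom F (comp g f) = comp (Fhom F g) (Fhom F f)) /\
  (forall A A' B B' (f : @hom M1 A A') (g : @hom M1 B B'),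
      comp (Fphi F A' B') (stenh (Fhom F f) (Fhom F g)) =
      comp (Fhom F (stenh f g)) (Fphi F A B)) /\
  (forall A B : ob M1, comp (Fphi_inv F A B) (Fphi F A B) = idm _) /\
  (forall A B : ob M1, comp (Fphi F A B) (Fphi_inv F A B) = idm _) /\
  comp (Feps_inv F) (Feps F) = idm _ /\
  comp (Feps F) (Feps_inv F) = idm _ /\
  (forall A B D : ob M1,
      comp (Fhom F (sassoc A B D))
           (comp (Fphi F A (sten B D)) (stenh (idm (Fob F A)) (Fphi F B D))) =
      comp (Fphi F (sten A B) D)
           (comp (stenh (Fphi F A B) (idm (Fob F D)))
                 (sassoc (Fob F A) (Fob F B) (Fob F D)))) /\
  (forall A : ob M1, comp (Fhom F (lunit A))
                  (comp (Fphi F munit A) (stenh (Feps F) (idm (Fob F A)))) =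
             lunit (Fob F A)) /\
  (forall A : ob M1, comp (Fhom F (runit A))
                  (comp (Fphi F A munit) (stenh (idm (Fob F A)) (Feps F))) =
             runit (Fob F A)).

Definition is_equivalence_functor (M1 M2 : MonData) (F : MonFunctor M1 M2) : Prop :=
  (forall A B (g : @hom M2 (Fob F A) (Fob F B)), exists f, Fhom F f = g) /\
  (forall A B (f f' : @hom M1 A B), Fhom F f = Fhom F f' -> f = f') /\
  (forall Y : ob M2, exists (X : ob M1) (i : @hom M2 (Fob F X) Y)
                            (j : @hom M2 Y (Fob F X)),
      comp i j = idm Y /\ comp j i = idm (Fob F X)).

Definition monoidal_equivalence (M1 M2 : MonData) : Prop :=
  exists F : MonFunctor M1 M2, is_strong_monoidal F /\ is_equivalence_functor F.

Arguments Ntensor_unit_closed : clear implicits.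

Definition NtensorEl (C : MonData) (N : ob C) : MonData :=
  minusEl (Ntensor_unit_closed C N).

(* The comparison functor sends the adjoined unit to I and the unique object of
   (C(N,N), star) to N, and is the identity on arrows.  Its structure map at
   (N, N) is code; since decode is inverse to code, naturality of this map is
   the definition of f star g, and associativity coherence is the definition of
   the associator of star.  The functor is full and faithful because the
   de-element construction deletes all arrows between I and the other objects,
   and it is essentially surjective because N (x) N ~ N, N (x) I ~ N and
   I (x) N ~ N collapse every tensor word containing N onto N. *)


Set Implicit Arguments.

Section MonoidalLaws.
Variable C : MonData.
Hypothesis HC : is_monoidal C.

Lemma comp_idl {A B : ob C} (f : hom A B) : comp (idm B) f = f.
Proof. destruct HC as [[[H _] _] _]; apply H. Qed.

Lemma comp_idr {A B : ob C} (f : hom A B) : comp f (idm A) = f.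
Proof. destruct HC as [[[_ [H _]] _] _]; apply H. Qed.

Lemma compA {A B D E : ob C} (f : hom A B) (g : hom B D) (h : hom D E) :
  comp h (comp g f) = comp (comp h g) f.
Proof. destruct HC as [[[_ [_ H]] _] _]; apply H. Qed.

Lemma stenh_idm (A B : ob C) : stenh (idm A) (idm B) = idm (sten A B).
Proof. destruct HC as [[_ [H _]] _]; apply H. Qed.

Lemma stenh_comp {A A' A'' B B' B'' : ob C} (f : hom A A') (f' : hom A' A'')
    (g : hom B B') (g' : hom B' B'') :
  stenh (comp f' f) (comp g' g) = comp (stenh f' g') (stenh f g).
Proof. destruct HC as [[_ [_ [H _]]] _]; apply H. Qed.

Definition iso (A B : ob C) : Prop :=
  exists (i : hom A B) (j : hom B A), comp i j = idm B /\ comp j i = idm A.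

Lemma iso_refl (A : ob C) : iso A A.
Proof. exists (idm A), (idm A); rewrite comp_idl; auto. Qed.

Lemma iso_sym {A B : ob C} : iso A B -> iso B A.
Proof. intros (i & j & Hij & Hji); exists j, i; auto. Qed.

Lemma iso_trans {A B D : ob C} : iso A B -> iso B D -> iso A D.
Proof.
  intros (i & j & Hij & Hji) (i' & j' & Hij' & Hji').
  exists (comp i' i), (comp j j'); split.
  - rewrite <- compA, (compA j' j i), Hij, comp_idl; exact Hij'.
  - rewrite <- compA, (compA i i' j'), Hji', comp_idl; exact Hji.
Qed.

Lemma iso_sten {A A' B B' : ob C} :
  iso A A' -> iso B B' -> iso (sten A B) (sten A' B').
Proof.
  intros (i & j & Hij & Hji) (i' & j' & Hij' & Hji').
  exists (stenh i i'), (stenh j j'); split;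
    rewrite <- stenh_comp, ?Hij, ?Hji, ?Hij', ?Hji', stenh_idm; reflexivity.
Qed.

Lemma iso_lunit (A : ob C) : iso (sten munit A) A.
Proof. destruct HC as [_ [H1 [H2 _]]]; exists (lunit A), (lunit_inv A); auto. Qed.

Lemma iso_runit (A : ob C) : iso (sten A munit) A.
Proof. destruct HC as [_ [_ [_ [H1 [H2 _]]]]]; exists (runit A), (runit_inv A); auto. Qed.

Lemma interp_iso {N : ob C} :
  iso (sten N N) N ->
  forall w, if hasN w then iso N (interp C N w) else iso munit (interp C N w).
Proof.
  intros HNN w; induction w as [| |u IHu v IHv]; simpl; try apply iso_refl.
  revert IHu IHv; destruct (hasN u), (hasN v); simpl; intros IHu IHv.
  - exact (iso_trans (iso_sym HNN) (iso_sten IHu IHv)).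
  - exact (iso_trans (iso_sym (iso_runit N)) (iso_sten IHu IHv)).
  - exact (iso_trans (iso_sym (iso_lunit N)) (iso_sten IHu IHv)).
  - exact (iso_trans (iso_sym (iso_lunit munit)) (iso_sten IHu IHv)).
Qed.

Section StarSelfSimilar.
Variable N : ob C.
Variables (code : @hom C (sten N N) N) (decode : @hom C N (sten N N)).
Hypothesis HN : self_similar C N code decode.

Lemma code_stenh_star (f g : hom N N) :
  comp code (stenh f g) = comp (star C N code decode f g) code.
Proof.
  unfold star; destruct HN as [_ Hdc].
  rewrite <- !compA, Hdc, comp_idr; auto.
Qed.

Lemma star_assoc_code :
  comp (star_assoc C N code decode) (comp code (stenh (idm N) code)) =
  comp code (comp (stenh code (idm N)) (sassoc N N N)).
Proof.
  unfold star_assoc; destruct HN as [_ Hdc].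
  rewrite <- !compA, (compA _ code decode), Hdc, comp_idl, <- stenh_comp, Hdc,
    comp_idl, stenh_idm, comp_idr; reflexivity.
Qed.

Notation S := (plusI (starSemi C N code decode)).
Notation T := (NtensorEl C N).

Definition wordN : nword := exist _ wN eq_refl.

Definition el_N : ob T :=
  Some (exist _ (Some wordN) (ltac:(discriminate) : Some wordN <> None)).

Definition el_ob (x : ob S) : ob T := match x with None => None | Some _ => el_N end.

Definition el_hom (x y : ob S) : @hom S x y -> @hom T (el_ob x) (el_ob y) :=
  match x, y with
  | Some _, Some _ | None, None => fun f => f
  | _, _ => fun f => match f with end
  end.

Definition el_phi (x y : ob S) :
  @hom T (sten (el_ob x) (el_ob y)) (el_ob (sten x y)) :=
  match x, y with
  | Some _, Some _ => code
  | Some _, None | None, Some _ => idm N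
  | None, None => tt
  end.

Definition el_phi_inv (x y : ob S) :
  @hom T (el_ob (sten x y)) (sten (el_ob x) (el_ob y)) :=
  match x, y with
  | Some _, Some _ => decode
  | Some _, None | None, Some _ => idm N
  | None, None => tt
  end.

Definition el_functor : MonFunctor S T :=
  {| Fob := el_ob; Fhom := el_hom; Fphi := el_phi; Fphi_inv := el_phi_inv;
     Feps := tt; Feps_inv := tt |}.

Ltac case_objects_homs :=
  intros; repeat match goal with
                 | x : ?X |- _ =>
                     let X' := eval hnf in X in
                     match X' with
                     | option _ => destruct x as [[]|]
                     | unit => destruct x
                     | Empty_set => destruct x
                     end
                 end; cbn.

Lemma nt_tenh_nonunit (v v' w w' : nword)
    (f : hom (interp C N (proj1_sig v)) (interp C N (proj1_sig v')))
    (g : hom (interp C N (proj1_sig w)) (interp C N (proj1_sig w'))) :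
  nt_tenh C N (Some v) (Some v') (Some w) (Some w') f g = stenh f g.
Proof.
  unfold nt_tenh; cbn [nt_k nt_kinv nt_ten]; rewrite comp_idl, comp_idr; reflexivity.
Qed.

Lemma nt_assoc_nonunit (u v w : nword) :
  nt_assoc C N (Some u) (Some v) (Some w) =
  sassoc (interp C N (proj1_sig u)) (interp C N (proj1_sig v)) (interp C N (proj1_sig w)).
Proof.
  unfold nt_assoc; cbn [nt_k nt_kinv nt_ten].
  rewrite !stenh_idm, !comp_idl, !comp_idr; reflexivity.
Qed.

Lemma el_functor_strong_monoidal : is_strong_monoidal el_functor.
Proof.
  destruct HN as [Hcd Hdc].
  unfold is_strong_monoidal; repeat split; case_objects_homs;
    rewrite ?nt_tenh_nonunit, ?nt_assoc_nonunit, ?stenh_idm, ?comp_idl, ?comp_idr;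
    auto using code_stenh_star, star_assoc_code.
Qed.

Lemma el_functor_full_faithful :
  (forall A B (g : @hom T (el_ob A) (el_ob B)), exists f, el_hom A B f = g) /\
  (forall A B (f f' : @hom S A B), el_hom A B f = el_hom A B f' -> f = f').
Proof. split; case_objects_homs; eauto. Qed.

Lemma el_functor_ess_surj (Y : ob T) :
  exists (X : ob S) (i : @hom T (el_ob X) Y) (j : @hom T Y (el_ob X)),
    comp i j = idm Y /\ comp j i = idm (el_ob X).
Proof.
  destruct Y as [[[[w Hw]|] Hne]|].
  - assert (Hcode : iso (sten N N) N) by (exists code, decode; exact HN).
    pose proof (interp_iso Hcode w) as Hw'; rewrite Hw in Hw'.
    destruct Hw' as (i & j & Hij & Hji).
    exists (Some tt), i, j; auto.
  - exfalso; apply Hne; reflexivity.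
  - exists None, tt, tt; auto.
Qed.

End StarSelfSimilar.
End MonoidalLaws.

Theorem mainTheorem4 (C : MonData) (HC : is_monoidal C) (N : ob C)
    (code : @hom C (sten N N) N) (decode : @hom C N (sten N N))
    (HN : self_similar C N code decode) :
  monoidal_equivalence (plusI (starSemi C N code decode)) (NtensorEl C N).
Proof.
  exists (el_functor C N code decode).
  split; [exact (el_functor_strong_monoidal HC HN) |].
  destruct (el_functor_full_faithful C N code decode) as [Hfull Hfaithful].
  exact (conj Hfull (conj Hfaithful (el_functor_ess_surj HC HN))).
Qed.
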